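(* Let $n$ be an even positive integer and $m$ a positive divisor of $n$. Let $G:\mathbb{F}_{2^n}\to\mathbb{F}_{2^m}$ be a vectorial bent function and $g:\mathbb{F}_{2^n}\to\mathbb{F}_2\subseteq\mathbb{F}_{2^m}$ a Boolean function. Then $H(x)=G(x)+g(x)$ is a vectorial bent (respectively, vectorial plateaued) $(n,m)$-function if and only if for every $\lambda\in\mathbb{F}_{2^m}^*$ with $\mathrm{Tr}^m_1(\lambda)=1$, the Boolean function $G_\lambda(x)+g(x)$ is bent (respectively, plateaued).
   Context: $\mathrm{Tr}^m_1(x)=\sum_{i=0}^{m-1}x^{2^i}$. For an $(n,m)$-function $F:\mathbb{F}_{2^n}\to\mathbb{F}_{2^m}$ and $\lambda\in\mathbb{F}_{2^m}^*$, the component $F_\lambda(x)=\mathrm{Tr}^m_1(\lambda F(x))$. For a Boolean function $f$ on $\mathbb{F}_{2^n}$, $W_f(a)=\sum_x(-1)^{f(x)+\mathrm{Tr}^n_1(ax)}$; $f$ is bent if $|W_f(a)|=2^{n/2}$ for all $a$, and plateaued if $W_f$ takes values in $\{0,\pm2^s\}$ for some integer $n/2\le s\le n$. $F$ is vectorial bent (resp. vectorial plateaued) if all its components $F_\lambda$, $\lambda\neq0$, are bent (resp. plateaued). *)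

From mathcomp Require Import all_boot all_algebra all_field.
Set Implicit Arguments. Unset Strict Implicit. Unset Printing Implicit Defensive.
Import GRing.Theory Num.Theory.
Local Open Scope ring_scope.

Definition trace (F : ringType) (k : nat) (x : F) : F := \sum_(i < k) x ^+ (2 ^ i).

(* Boolean functions on K are modelled as K -> bool (F_2 = {false,true}).
   The value Tr(a x) lies in the prime field {0,1}; we read it as the bit (Tr(ax) != 0). *)
Definition walsh (K : finFieldType) (n : nat) (f : K -> bool) (a : K) : int :=
  \sum_(x : K) (-1) ^+ (f x) * (-1) ^+ (trace n (a * x) != 0).

Definition bent (K : finFieldType) (n : nat) (f : K -> bool) : Prop :=
  forall a : K, `|walsh n f a| = 2 ^+ (n./2).

Definition plateaued (K : finFieldType) (n : nat) (f : K -> bool) : Prop :=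
  exists s : nat, (n./2 <= s <= n)%N /\
    forall a : K, walsh n f a \in [:: 0; 2 ^+ s; - 2 ^+ s].

Definition component (K L : finFieldType) (m : nat) (F : K -> L) (l : L) : K -> bool :=
  fun x => trace m (l * F x) != 0.

Definition vbent (K L : finFieldType) (n m : nat) (F : K -> L) : Prop :=
  forall l : L, l != 0 -> bent n (component m F l).

Definition vplateaued (K L : finFieldType) (n m : nat) (F : K -> L) : Prop :=
  forall l : L, l != 0 -> plateaued n (component m F l).

From mathcomp Require Import all_boot all_algebra all_field.
Import GRing.Theory Num.Theory.
Local Open Scope ring_scope.

(* In characteristic 2 the trace is additive and, on F_(2^m), takes values in
   F_2, so Tr(l (G x + g x)) = Tr(l G x) + g x Tr(l) with Tr(l) in {0, 1}.
   Hence the components H_l with Tr(l) = 0 are the components G_l, which are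
   bent (and so plateaued) by hypothesis, while those with Tr(l) = 1 are
   exactly the Boolean functions G_l + g. *)

Section TraceCharTwo.
Variables (R : comNzRingType) (m : nat).
Hypothesis charR2 : (2 \in [pchar R])%N.

Lemma trace0 : trace m (0 : R) = 0.
Proof. by rewrite /trace big1 // => i _; rewrite expr0n expn_eq0. Qed.

Lemma traceD (a b : R) : trace m (a + b) = trace m a + trace m b.
Proof.
rewrite /trace -big_split; apply: eq_bigr => i _.
by apply: exprDn_pchar; rewrite pnatX pnatE // charR2.
Qed.

Lemma addr_neq0_bits (a b : R) : (a = 0 \/ a = 1) -> (b = 0 \/ b = 1) ->
  (a + b != 0) = (a != 0) (+) (b != 0).
Proof.
have one_one : (1 : R) + 1 = 0 by rewrite -mulr2n (pcharf0 charR2).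
by move=> [->|->] [->|->]; rewrite ?addr0 ?add0r ?one_one ?eqxx ?oner_eq0.
Qed.

End TraceCharTwo.

Section TraceFinField.
Context {L : finFieldType} {m : nat}.
Hypothesis cardL : #|L| = (2 ^ m)%N.

Lemma pchar2_card : (2 \in [pchar L])%N.
Proof. exact: card_finPcharP cardL _. Qed.

Lemma sqr_trace (a : L) : trace m a ^+ 2 = trace m a.
Proof.
have sqrD (x y : L) : (x + y) ^+ 2 = x ^+ 2 + y ^+ 2.
  by apply: exprDn_pchar; rewrite pnatE // pchar2_card.
rewrite /trace (big_morph _ sqrD (expr0n _ _)).
case: m cardL => [|k cardLk]; first by rewrite !big_ord0.
rewrite big_ord_recr big_ord_recl /= -exprM -expnSr -cardLk expf_card addrC.
by congr (_ + _); apply: eq_bigr => i _; rewrite -exprM -expnSr.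
Qed.

Lemma trace_bit (a : L) : trace m a = 0 \/ trace m a = 1.
Proof.
have : trace m a * (trace m a - 1) == 0.
  by rewrite mulrBr mulr1 -expr2 sqr_trace subrr.
by rewrite mulf_eq0 subr_eq0 => /orP[/eqP|/eqP]; [left|right].
Qed.

Lemma component_add_bool (K : finFieldType) (G : K -> L) (g : K -> bool) l x :
  component m (fun y => G y + (g y)%:R) l x =
  component m G l x (+) (g x && (trace m l != 0)).
Proof.
have charL2 := pchar2_card.
rewrite /component mulrDr traceD // addr_neq0_bits //; try exact: trace_bit.
by case: (g x); rewrite /= ?mulr1 ?mulr0 ?trace0 ?eqxx.
Qed.

End TraceFinField.

Section WalshSpectrum.
Variables (K : finFieldType) (n : nat).

Lemma eq_walsh {f f' : K -> bool} : f =1 f' -> walsh n f =1 walsh n f'.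
Proof. by move=> eq_f a; apply: eq_bigr => x _; rewrite eq_f. Qed.

Lemma eq_bent (f f' : K -> bool) : f =1 f' -> bent n f -> bent n f'.
Proof. by move=> eq_f bent_f a; rewrite -(eq_walsh eq_f). Qed.

Lemma eq_plateaued (f f' : K -> bool) :
  f =1 f' -> plateaued n f -> plateaued n f'.
Proof.
move=> eq_f [s [s_range plat_f]]; exists s; split=> // a.
by rewrite -(eq_walsh eq_f).
Qed.

Lemma bent_plateaued (f : K -> bool) : bent n f -> plateaued n f.
Proof.
move=> bent_f; exists n./2; split.
  by rewrite leqnn /= -divn2 leq_div.
move=> a; have := bent_f a; rewrite !inE.
have [w_ge0|w_lt0] := lerP 0 (walsh n f a).
  by rewrite ger0_norm // => ->; rewrite eqxx orbT.
by rewrite ltr0_norm // => <-; rewrite opprK eqxx !orbT.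
Qed.

End WalshSpectrum.

Section ComponentsAddBool.
Variables (K L : finFieldType) (m : nat).
Hypothesis cardL : #|L| = (2 ^ m)%N.
Variables (G : K -> L) (g : K -> bool) (P : (K -> bool) -> Prop).
Hypothesis eq_P : forall f f', f =1 f' -> P f -> P f'.

Lemma components_add_bool :
  (forall l, l != 0 -> trace m l = 0 -> P (component m G l)) ->
  (forall l, l != 0 -> P (component m (fun x => G x + (g x)%:R) l)) <->
  (forall l, l != 0 -> trace m l = 1 -> P (fun x => component m G l x (+) g x)).
Proof.
move=> PG; split=> PH l l_neq0.
  move=> tr_l; apply: eq_P (PH l l_neq0) => x.
  by rewrite component_add_bool // tr_l oner_eq0 andbT.
have [tr_l|tr_l] := trace_bit cardL l.
  apply: eq_P (PG l l_neq0 tr_l) => x.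
  by rewrite component_add_bool // tr_l eqxx andbF addbF.
apply: eq_P (PH l l_neq0 tr_l) => x.
by rewrite component_add_bool // tr_l oner_eq0 andbT.
Qed.

End ComponentsAddBool.

Theorem theorem3 (K L : finFieldType) (n m : nat)
  (hn : (0 < n)%N) (hne : ~~ odd n) (hm : (0 < m)%N) (hmn : (m %| n)%N)
  (cardK : #|K| = (2 ^ n)%N) (cardL : #|L| = (2 ^ m)%N)
  (G : K -> L) (g : K -> bool) :
  vbent n m G ->
  let H := fun x => G x + (g x)%:R in
  (vbent n m H <->
     (forall l : L, l != 0 -> trace m l = 1 ->
        bent n (fun x => component m G l x (+) g x)))
  /\
  (vplateaued n m H <->
     (forall l : L, l != 0 -> trace m l = 1 ->
        plateaued n (fun x => component m G l x (+) g x))).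
Proof.
move=> bent_G H; split.
  apply: components_add_bool => // [f f'|l l_neq0 _]; first exact: eq_bent.
  exact: bent_G.
apply: components_add_bool => // [f f'|l l_neq0 _]; first exact: eq_plateaued.
exact/bent_plateaued/bent_G.
Qed.
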